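(* Let $X,Y,T$ be cellular spaces with $X$ and $T$ compact, let $r\ge0$, and let $a,b\colon X\to Y$ be maps with $a\overset{r}{\approx}b$. Then the maps $a\wedge\mathrm{id}_T,\ b\wedge\mathrm{id}_T\colon X\wedge T\to Y\wedge T$ satisfy $a\wedge\mathrm{id}_T\overset{r}{\approx}b\wedge\mathrm{id}_T$.
   Context: Cellular space = based CW complex; maps based. Strong similarity: $\langle W\rangle$ = free abelian group on a set $W$. $Y^X$ = based maps (compact-open), based at the constant map; $Y^X_a$ = path component of $a$; $V\mapsto V|_R$ restriction; $\mathcal F_n(X)$ = finite $R\subseteq X$ containing the basepoint with $|R|\le n+1$; $\langle Y^X\rangle^{(s)}=\{V:V|_R=0\ \forall R\in\mathcal F_{s-1}(X)\}$. For unbased $U,V$: $V^{(U)}$ = unbased maps; $\Xi^U(v)$ = constant map at $v$; for $U=\coprod_iU_i$ the combining product $\boxed{\sqcup}_i\langle w_i\rangle=\langle w\rangle$, $w|_{U_i}=w_i$, multilinear. For nonempty finite $E$: simplex $\Delta E$, faces $\Delta F$; layouts = sets $A$ of pairwise disjoint nonempty subsets; $\Delta[A]=\coprod_{F\in A}\Delta F$; $S\in\langle V^{(\Delta E)}\rangle$ fissile if $S|_{\Delta[A]}=\boxed{\sqcup}_{F\in A}S|_{\Delta F}$ for all layouts. $U\wr X=(U\times X)/(U\times\{x_0\})$, $\#^X(w)(u\wr x)=w(u)(x)$, $\langle (Y^X)^{(U)}\rangle^{(s)}_X=\langle\#^X\rangle^{-1}\langle Y^{U\wr X}\rangle^{(s)}$.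 $a\overset{r}{\approx}b$ iff for each nonempty finite $E$ there is a fissile $S\in\langle (Y^X_a)^{(\Delta E)}\rangle$ with $\langle\Xi^{\Delta E}(b)\rangle-S\in\langle (Y^X)^{(\Delta E)}\rangle^{(r+1)}_X$. *)

From HB Require Import structures.
From mathcomp Require Import all_boot all_order all_algebra generic_quotient.
From mathcomp Require Import all_classical all_reals all_analysis.
From mathcomp Require Import Rstruct Rstruct_topology.

Set Implicit Arguments.
Unset Strict Implicit.
Unset Printing Implicit Defensive.

Import Order.TTheory GRing.Theory Num.Theory.
Local Open Scope classical_set_scope.
Local Open Scope ring_scope.
Local Open Scope quotient_scope.

Notation RR := Rdefinitions.R.

(* Cellular spaces = based CW complexes (Hatcher, Prop. A.2).          *)

Definition cl_disk (n : nat) : set 'rV[RR]_n :=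
  [set v | \sum_(i < n) v ord0 i ^+ 2 <= 1].
Definition open_disk (n : nat) : set 'rV[RR]_n :=
  [set v | \sum_(i < n) v ord0 i ^+ 2 < 1].
Definition sphere (n : nat) : set 'rV[RR]_n :=
  [set v | \sum_(i < n) v ord0 i ^+ 2 = 1].
Arguments cl_disk : clear implicits.
Arguments open_disk : clear implicits.
Arguments sphere : clear implicits.

Definition cellular (X : ptopologicalType) : Prop :=
  hausdorff_space X /\
  exists (I : Type) (d : I -> nat) (Phi : forall i, 'rV[RR]_(d i) -> X),
    [/\ (forall i, continuous (from_subspace (cl_disk (d i)) (Phi i))),
        ((forall i u v, open_disk (d i) u -> open_disk (d i) v ->
            Phi i u = Phi i v -> u = v) /\
         (forall x : X, exists! i, exists2 u, open_disk (d i) u & Phi i u = x)),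
        (forall i, exists J : seq I,
            (forall j, List.In j J -> (d j < d i)%N) /\
            (forall u, sphere (d i) u ->
               exists j, List.In j J /\ exists2 v, open_disk (d j) v &
                 Phi j v = Phi i u)),
        (forall A : set X, closed A <->
            forall i, closed (A `&` closure (Phi i @` open_disk (d i))))
      & exists i, d i = 0%N /\ Phi i @` open_disk (d i) = [set point]].

Section Smash.
Variables (X T : ptopologicalType).

Definition in_wedge (p : X * T) : Prop := p.1 = point \/ p.2 = point.

Definition smash_rel : rel (X * T) :=
  fun p q => `[< p = q \/ (in_wedge p /\ in_wedge q) >].

Lemma smash_rel_refl : reflexive smash_rel.
Proof. by move=> p; apply/asboolP; left. Qed.

Lemma smash_rel_sym : symmetric smash_rel.
Proof.
move=> p q; apply/asboolP/asboolP => -[->|[]]; by [left | right].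
Qed.

Lemma smash_rel_trans : transitive smash_rel.
Proof.
move=> q p s /asboolP [->//|[wp wq]] /asboolP [<-|[_ ws]];
  apply/asboolP; right; by split.
Qed.

Canonical smash_equiv := EquivRel smash_rel smash_rel_refl smash_rel_sym
  smash_rel_trans.

Definition smash := {eq_quot smash_equiv}.
HB.instance Definition _ := Topological.copy smash (quotient_topology smash).
HB.instance Definition _ := Quotient.on smash.
HB.instance Definition _ :=
  isPointed.Build smash (\pi_smash (point : X * T)).

End Smash.

Definition smash_map (X Y T : ptopologicalType) (f : X -> Y) :
    smash X T -> smash Y T :=
  fun q => \pi_(smash Y T) (f (repr q).1, (repr q).2).
Arguments smash_map {X Y} T f _.

Section Approx.
Variables (X Y : ptopologicalType).

Definition bmap (f : X -> Y) : Prop := continuous f /\ f point = point.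

Definition unit_interval : set RR := [set t | 0 <= t <= 1].

Definition path_comp (a : X -> Y) : set {compact-open, X -> Y} :=
  [set f | exists g : RR -> {compact-open, X -> Y},
     [/\ continuous (from_subspace (unit_interval) g), g 0 = a, g 1 = f
       & forall t, unit_interval t -> bmap (g t)]].

Definition face (E : finType) (F : {set E}) : set {ptws E -> RR} :=
  [set p | [/\ forall e, 0 <= p e, \sum_(e : E) p e = 1
             & forall e, e \notin F -> p e = 0]].

Definition simplex (E : finType) := set_type (face [set: E]).

Definition faceD (E : finType) (F : {set E}) : set (simplex E) :=
  [set p | face F (set_val p)].

(* candidate generators of < (Y^X)^(Delta E) > : functions Delta E -> Y^X *)
Definition gen (E : finType) := simplex E -> {compact-open, X -> Y}.

Definition is_map_into (E : finType) (W : set (X -> Y)) (w : gen E) : Prop :=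
  continuous w /\ forall p, W (w p).

(* formal Z-linear combinations: finitely supported coefficient functions *)
Definition fin_supp (M : Type) (S : M -> int) : Prop :=
  finite_set [set w | S w != 0].

Definition supported_in (M : Type) (P : set M) (S : M -> int) : Prop :=
  forall w, S w != 0 -> P w.

Definition csum (M : choiceType) (S : M -> int) (P : set M) : int :=
  \sum_(w \in P) S w.

Definition agree_on (E : finType) (D : set (simplex E)) (w w' : gen E) :=
  forall p, D p -> w p = w' p.

Definition layout (E : finType) (A : {set {set E}}) : Prop :=
  (forall F, F \in A -> F != finset.set0) /\
  (forall F G, F \in A -> G \in A -> F != G -> F :&: G = finset.set0).

(* S is fissile: for every layout A and every generator g of
   <W^(Delta[A])> (a map defined on the disjoint union of the faces),
   coefficient of g in S|_{Delta[A]} = coefficient of g in the combining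
   product of the S|_{Delta F}, F in A. *)
Definition fissile (E : finType) (W : set (X -> Y)) (S : gen E -> int) :=
  forall A : {set {set E}}, layout A ->
  forall g : gen E,
    (forall F, F \in A ->
       continuous (from_subspace (faceD F) g) /\ forall p, faceD F p -> W (g p)) ->
    csum S [set w | forall F, F \in A -> agree_on (faceD F) w g] =
    \prod_(F in A) csum S [set w | agree_on (faceD F) w g].

(* V lies in < (Y^X)^(Delta E) >^(s)_X : for every finite R in the half
   smash Delta E |x X containing the basepoint with |R| <= s, the
   restriction to R of <#^X>(V) vanishes.  R is given by the list l of its
   non-base points u |x x (x <> basepoint), so |R| = 1 + #l <= s. *)
Definition in_filt (E : finType) (s : nat) (V : gen E -> int) : Prop :=
  forall l : seq (simplex E * X),
    (size l < s)%N -> (forall ux, List.In ux l -> ux.2 <> point) ->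
    forall w0 : gen E,
      csum V [set w | forall ux, List.In ux l -> w ux.1 ux.2 = w0 ux.1 ux.2]
      = 0.

Definition ind (M : Type) (w0 w : M) : int := if pselect (w = w0) then 1 else 0.

Definition r_approx (r : nat) (a b : X -> Y) : Prop :=
  forall E : finType, (0 < #|E|)%N ->
  exists S : gen E -> int,
    [/\ fin_supp S, supported_in (is_map_into (path_comp a)) S,
        fissile (path_comp a) S
      & in_filt r.+1 (fun w => ind (fun _ => b) w - S w)].

End Approx.

From HB Require Import structures.
From mathcomp Require Import all_boot all_order all_algebra generic_quotient.
From mathcomp Require Import all_classical all_reals all_analysis.
From mathcomp Require Import Rstruct Rstruct_topology.

(* For based f : X -> Y the map f ∧ id_T depends continuously on f: if
   H : Z × X -> Y is continuous and based in X, then (z, q) ↦ (H z ∧ id_T) q is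
   continuous on Z × (X ∧ T), by the tube lemma over the compact spaces X and T.
   So w ↦ (p ↦ w p ∧ id_T) sends continuous simplices into Y^X_a to continuous
   simplices into (Y ∧ T)^(X ∧ T)_(a ∧ id), and the homomorphism it induces on
   chains carries a fissile S witnessing a ≈_r b to a witness for
   a ∧ id ≈_r b ∧ id.  When T is not a point, f ↦ f ∧ id_T is injective on
   based maps and (f ∧ id_T)(x ∧ t) with t ≠ * determines f x, so agreement of
   the images on a face, or at finitely many points u ⋉ (x ∧ t), is agreement
   of the maps on the face, or at the points u ⋉ x: fissility and the
   filtration condition pull back to those of S.  When T is a point all maps
   into Y ∧ T coincide, and fissility reduces to S having total coefficient 1. *)

Set Implicit Arguments.
Unset Strict Implicit.
Unset Printing Implicit Defensive.
Local Open Scope classical_set_scope.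
Local Open Scope quotient_scope.
Import Order.TTheory GRing.Theory Num.Theory.

Section SmashQuotient.
Variables (X T : ptopologicalType).
Local Notation pi := (\pi_(smash X T)).

Lemma smash_relP (p q : X * T) :
  smash_rel p q <-> p = q \/ in_wedge p /\ in_wedge q.
Proof. by split=> /asboolP. Qed.

Lemma pi_smash_eq (p q : X * T) : pi p = pi q <-> smash_rel p q.
Proof. by split=> /eqmodP. Qed.

Lemma smash_rel_repr (p : X * T) : smash_rel p (repr (pi p)).
Proof. by apply/pi_smash_eq; rewrite reprK. Qed.

Lemma pi_wedge (p : X * T) : in_wedge p -> pi p = point.
Proof.
by move=> wp; apply/pi_smash_eq/smash_relP; right; split => //; left.
Qed.

Lemma repr_pi_offwedge (p : X * T) : ~ in_wedge p -> repr (pi p) = p.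
Proof. by move=> wp; case/smash_relP: (smash_rel_repr p) => [|[]]. Qed.

Lemma repr_wedge (q : smash X T) : in_wedge (repr q) <-> q = point.
Proof.
split=> [wq|->]; first by rewrite -[q]reprK pi_wedge.
by case/smash_relP: (smash_rel_repr point) => [<-|[]//]; left.
Qed.

Lemma repr_point_wedge : in_wedge (repr (point : smash X T)).
Proof. exact/repr_wedge. Qed.

Lemma repr_offpoint (q : smash X T) :
  q <> point -> (repr q).1 <> point /\ (repr q).2 <> point.
Proof. by move=> qN; split=> e; apply/qN/repr_wedge; [left | right]. Qed.

Lemma pi_inj_fst (t : T) : t <> point -> injective (fun x : X => pi (x, t)).
Proof.
move=> tN x x' /pi_smash_eq/smash_relP [[]//|[[/= x0|//] [/= x'0|//]]].
by rewrite x0 x'0.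
Qed.

Lemma open_pi_saturated (O : set (X * T)) : open O ->
  (forall p p', O p -> smash_rel p p' -> O p') -> open (pi @` O).
Proof.
move=> oO satO; suff e : pi @^-1` (pi @` O) = O.
  by have : open (pi @^-1` (pi @` O)) by rewrite e.
rewrite eqEsubset; split => [p [p' Op' /pi_smash_eq]|p Op]; last by exists p.
exact: satO.
Qed.

End SmashQuotient.

Lemma open_setX (U V : topologicalType) (A : set U) (B : set V) :
  open A -> open B -> open (A `*` B).
Proof.
move=> oA oB; rewrite openE => -[a b] [/= Aa Bb].
by exists (A, B) => //=; split; apply: open_nbhs_nbhs.
Qed.

Lemma hausdorff_open_setC1 (U : topologicalType) (x : U) :
  hausdorff_space U -> open (~` [set x]).
Proof.
by move=> hU; apply/closed_openC/accessible_closed_set1/hausdorff_accessible.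
Qed.

Lemma compact_tube (A : topologicalType) (I : Type) (F : set_system I)
    (P : I -> A -> Prop) : Filter F -> compact [set: A] ->
  (forall a : A, \forall a' \near a & i \near F, P i a') ->
  \forall i \near F, forall a, P i a.
Proof.
move=> FF /compact_near_coveringP cA Pa.
by apply: filterS (cA _ _ P FF (fun a _ => Pa a)) => i + a; apply.
Qed.

Section SmashMap.
Variables (X Y T : ptopologicalType).

Lemma smash_map_point (f : X -> Y) :
  f point = point -> smash_map T f point = point.
Proof.
move=> fp; rewrite /smash_map pi_wedge //.
by case: (repr_point_wedge X T) => e; [left; rewrite e | right].
Qed.

Lemma smash_map_offpoint_eq (f g : X -> Y) (q : smash X T) : q <> point ->
  smash_map T f q = smash_map T g q <-> f (repr q).1 = g (repr q).1.
Proof.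
move=> /repr_offpoint [_ tN]; split=> [|e]; last by rewrite /smash_map e.
by move/(pi_inj_fst tN).
Qed.

End SmashMap.

Section SmashFamily.
Variables (X Y T : ptopologicalType) (Z : topologicalType) (H : Z -> X -> Y).
Hypotheses (hX : hausdorff_space X) (hT : hausdorff_space T)
  (cX : compact [set: X]) (cT : compact [set: T])
  (cH : continuous (fun zx : Z * X => H zx.1 zx.2))
  (H_point : forall z, H z point = point).
Local Notation F := (fun zq : Z * smash X T => smash_map T (H zq.1) zq.2).

Lemma near_smash_family (W : set (Y * T)) (z0 : Z) (x : X) (t : T) :
  open W -> W (H z0 x, t) -> exists N P B, [/\ nbhs z0 N, nbhs x P, nbhs t B &
    forall z x' t', N z -> P x' -> B t' -> W (H z x', t')].
Proof.
move=> oW Wp; have [[A B] /= [Ay Bt] ABW] : nbhs (H z0 x, t) W.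
  exact: open_nbhs_nbhs.
have [[N P] /= [Nz Px] NPA] := @cH (z0, x) A Ay.
exists N, P, B; split => // z x' t' Nz' Px' Bt'.
by apply: ABW; split => //=; apply: (NPA (z, x')).
Qed.

Lemma smash_family_nbhs (U : set (smash Y T)) (z0 : Z) (q0 : smash X T)
    (N : set Z) (O : set (X * T)) :
  nbhs z0 N -> open O -> (forall p p', O p -> smash_rel p p' -> O p') ->
  O (repr q0) ->
  (forall z p, N z -> O p -> U (\pi_(smash Y T) (H z p.1, p.2))) ->
  nbhs (z0, q0) (F @^-1` U).
Proof.
move=> Nz0 oO satO Oq0 NOU; exists (N, \pi_(smash X T) @` O) => /=.
  split=> //; apply: open_nbhs_nbhs; split; first exact: open_pi_saturated.
  by exists (repr q0) => //; rewrite reprK.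
case=> z q /= [Nz [p Op <-]]; apply: NOU => //.
by apply: satO Op _; exact: smash_rel_repr.
Qed.

Lemma smash_family_nbhs_point (U : set (smash Y T)) (z0 : Z) :
  open U -> U point -> nbhs (z0, point : smash X T) (F @^-1` U).
Proof.
move=> oU Upt; pose W := \pi_(smash Y T) @^-1` U.
have oW : open W by exact: oU.
(* W contains the wedge; the tube lemma over X (resp. T) gives the points whose
   T- (resp. X-) coordinate is near the base point. *)
have W_wedge p : in_wedge p -> W p by move=> wp; rewrite /W /= pi_wedge.
have [[N1 Q1] [/= N1z Q1t] NQW] :
    \forall zt \near nbhs (z0, point : T), forall x, W (H zt.1 x, zt.2).
  refine (@compact_tube X _ _ (fun zt x => W (H zt.1 x, zt.2)) _ cX _) => x.
  have [N [P [B [Nz Px Bt NPBW]]]] :=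
    near_smash_family oW (W_wedge (H z0 x, point) (or_intror erefl)).
  exists (P, N `*` B) => /=; first by split => //; exists (N, B).
  by case=> x' [z t] /= [Px' [Nz' Bt']]; exact: NPBW.
have [[N2 P2] [/= N2z P2x] NPW] :
    \forall zx \near nbhs (z0, point : X), forall t, W (H zx.1 zx.2, t).
  refine (@compact_tube T _ _ (fun zx t => W (H zx.1 zx.2, t)) _ cT _) => t.
  have [N [P [B [Nz Px Bt NPBW]]]] :=
    near_smash_family oW (W_wedge (H z0 point, t) (or_introl (H_point z0))).
  exists (B, N `*` P) => /=; first by split => //; exists (N, P).
  by case=> t' [z x] /= [Bt' [Nz' Px']]; exact: NPBW.
apply: (smash_family_nbhs (N := N1 `&` N2)
  (O := (setT `*` Q1°) `|` (P2° `*` setT))).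
- exact: filterI.
- by apply: openU; apply: open_setX; (exact: openT || exact: open_interior).
- move=> p p' Op /smash_relP [<-//|[_ [e|e]]].
    by right; split => //=; rewrite e.
  by left; split => //=; rewrite e.
- by case: (repr_point_wedge X T) => e; [right | left]; split=> //=; rewrite e.
- move=> z [x t] [N1z' N2z'] [[_ /nbhs_singleton Qt]|[/nbhs_singleton Px _]].
    exact: (NQW (z, t)).
  exact: (NPW (z, x)).
Qed.

Lemma smash_family_nbhs_offpoint (U : set (smash Y T)) (z0 : Z)
    (q0 : smash X T) :
  open U -> q0 <> point -> U (F (z0, q0)) -> nbhs (z0, q0) (F @^-1` U).
Proof.
move=> oU q0N Uq0; pose W := \pi_(smash Y T) @^-1` U.
have [N [P [B [Nz Px Bt NPBW]]]] := @near_smash_family W z0 _ _ oU Uq0.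
apply: (smash_family_nbhs (N := N)
  (O := (P° `&` ~` [set point]) `*` (B° `&` ~` [set point]))) => //.
- by apply: open_setX; apply: openI;
    (exact: open_interior || exact: hausdorff_open_setC1).
- move=> p p' [[_ p1N] [_ p2N]] /smash_relP [<-//|[[]//]].
- by have [x0N t0N] := repr_offpoint q0N; split; split.
- move=> z [x t] Nz' [[/= /nbhs_singleton Px' _] [/nbhs_singleton Bt' _]].
  exact: NPBW.
Qed.

Lemma continuous_smash_family : continuous F.
Proof.
move=> [z0 q0] U /=; rewrite nbhsE => -[V [oV Vq] VU]; rewrite nbhs_simpl /=.
apply: filterS (fun _ => VU _) _.
case: (pselect (q0 = point)) => [q0pt|q0N]; last first.
  exact: smash_family_nbhs_offpoint.
move: Vq; rewrite q0pt (smash_map_point T (H_point z0)).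
exact: smash_family_nbhs_point.
Qed.

End SmashFamily.

Lemma compact_locally_compact (U : topologicalType) :
  compact [set: U] -> locally_compact [set: U].
Proof.
move=> cU x _; exists setT; last by split => //; exact: closedT.
by rewrite withinET; exact: filterT.
Qed.

Lemma unit_interval1 : unit_interval 1%R.
Proof. by rewrite /unit_interval /= lexx ler01. Qed.

Lemma path_comp_bmap (X Y : ptopologicalType) (a f : X -> Y) :
  path_comp a f -> bmap f.
Proof. by case=> g [_ _ <- bg]; apply: bg; exact: unit_interval1. Qed.

Section SmashCompactOpen.
Variables (X Y T : ptopologicalType).
Hypotheses (hX : hausdorff_space X) (hT : hausdorff_space T)
  (cX : compact [set: X]) (cT : compact [set: T]).
Import ArrowAsCompactOpen.

Lemma bmap_smash_map (f : X -> Y) : bmap f -> bmap (smash_map T f).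
Proof.
case=> cf fpt; split; last exact: smash_map_point.
have cH : continuous (fun zx : X * X => f zx.2).
  by move=> zx; apply: continuous_comp; [exact: cvg_snd | exact: cf].
have [_ /(_ point) //] := continuous_curry
  (@continuous_smash_family X Y T X (fun=> f) hX hT cX cT cH (fun=> fpt)).
Qed.

Lemma continuous_smash_map_family (Z : topologicalType)
    (w : Z -> {compact-open, X -> Y}) :
  continuous w -> (forall z, bmap (w z)) ->
  continuous (fun z =>
    smash_map T (w z) : {compact-open, smash X T -> smash Y T}).
Proof.
move=> cw bw.
have cu : continuous (fun zx : Z * X => w zx.1 zx.2).
  have -> : (fun zx : Z * X => w zx.1 zx.2) = uncurry w by apply/funext => -[].
  exact: continuous_uncurry (compact_locally_compact cX) hX cw
    (fun z => (bw z).1).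
exact: continuous_curry_fun
  (continuous_smash_family hX hT cX cT cu (fun z => (bw z).2)).
Qed.

Lemma path_comp_smash_map (a f : X -> Y) : bmap a -> path_comp a f ->
  path_comp (smash_map T a) (smash_map T f).
Proof.
move=> ba [g [cg g0 g1 bg]].
(* [h] is [g] with its values off the unit interval replaced by [a], so that
   it is based everywhere. *)
pose h : subspace unit_interval -> {compact-open, X -> Y} :=
  fun t => if pselect (unit_interval t) then g t else a.
have ch : continuous h.
  apply: (subspace_eq_continuous _ cg) => t; rewrite inE => It.
  by rewrite /h; case: pselect.
have bh t : bmap (h t) by rewrite /h; case: pselect => // It; apply: bg.
have h0 : h 0%R = a by rewrite /h; case: pselect.
have h1 : h 1%R = f.
  by rewrite /h; case: pselect => // I1N; case: I1N; exact: unit_interval1.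
exists (fun t : RR =>
  smash_map T (h t) : {compact-open, smash X T -> smash Y T}).
split=> [|||t _]; first exact: continuous_smash_map_family.
- by rewrite h0.
- by rewrite h1.
- exact: bmap_smash_map.
Qed.

Lemma is_map_into_smash (E : finType) (a : X -> Y) (w : gen X Y E) :
  bmap a -> is_map_into (path_comp a) w ->
  is_map_into (path_comp (smash_map T a)) (fun p => smash_map T (w p)).
Proof.
move=> ba [cw wa]; split=> [|p]; last exact: path_comp_smash_map.
exact: continuous_smash_map_family (fun p => path_comp_bmap (wa p)).
Qed.

End SmashCompactOpen.

Local Open Scope ring_scope.

Section FormalSums.
Variable M : choiceType.
Implicit Types (S : M -> int) (P Q : set M).

Definition supp_seq S : seq M :=
  finmap.enum_fset (fset_set [set w | S w != 0]).

Lemma supp_seqP S : fin_supp S -> forall w, (w \in supp_seq S) = (S w != 0).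
Proof. by move=> fS w; rewrite /supp_seq in_fset_set // mem_setE. Qed.

Lemma supp_seq_uniq S : uniq (supp_seq S).
Proof. exact: finmap.fset_uniq. Qed.

Lemma fin_supp_sub S (s : seq M) :
  (forall w, S w != 0 -> w \in s) -> fin_supp S.
Proof.
move=> sS; apply: (@sub_finite_set _ _ [set` s]); last exact: finite_seq.
by move=> w /= /sS.
Qed.

Lemma csum_seq S P (s : seq M) : uniq s -> (forall w, S w != 0 -> w \in s) ->
  csum S P = \sum_(w <- s | `[< P w >]) S w.
Proof.
move=> us sS; rewrite (@bigfs _ _ _ _ s (fun w => `[< P w >]) S us); last first.
  by move=> i _ nis; apply/eqP; apply: contraNT nis; exact: sS.
rewrite /csum; congr (\sum_(i \in _) _); apply/funext => w /=.
by apply/propext; split=> /asboolP.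
Qed.

Lemma csum_supp S P : fin_supp S ->
  csum S P = \sum_(w <- supp_seq S | `[< P w >]) S w.
Proof.
move=> fS; apply: csum_seq; first exact: supp_seq_uniq.
by move=> w; rewrite supp_seqP.
Qed.

Lemma eq_csum S P Q : (forall w, S w != 0 -> (P w <-> Q w)) ->
  csum S P = csum S Q.
Proof.
move=> PQ; rewrite /csum fsbig_supp [in RHS]fsbig_supp.
congr (\sum_(i \in _) _); apply/funext => w /=; apply/propext.
have PQw : S w <> 0 -> (P w <-> Q w) by move/eqP; exact: PQ.
by split=> -[Xw Sw]; split=> //; apply/(PQw Sw).
Qed.

Lemma csum0 S P : (forall w, P w -> S w = 0) -> csum S P = 0.
Proof. exact: fsbig1. Qed.

Lemma csum_neq0 S P : csum S P != 0 -> exists2 w, P w & S w != 0.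
Proof. by move/(@fsbigN1 _ _ _ unit M P (fun _ w => S w) tt). Qed.

Lemma fin_suppB S1 S2 : fin_supp S1 -> fin_supp S2 ->
  fin_supp (fun w => S1 w - S2 w).
Proof.
move=> f1 f2; apply: (@fin_supp_sub _ (supp_seq S1 ++ supp_seq S2)) => w.
rewrite mem_cat (supp_seqP f1) (supp_seqP f2).
by case: (eqVneq (S1 w) 0) => [->|//]; rewrite sub0r oppr_eq0 orbC => ->.
Qed.

Lemma csumB S1 S2 P : fin_supp S1 -> fin_supp S2 ->
  csum (fun w => S1 w - S2 w) P = csum S1 P - csum S2 P.
Proof.
move=> f1 f2; pose s := undup (supp_seq S1 ++ supp_seq S2).
have us : uniq s by exact: undup_uniq.
have sS1 w : S1 w != 0 -> w \in s.
  by rewrite mem_undup mem_cat supp_seqP // => ->.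
have sS2 w : S2 w != 0 -> w \in s.
  by rewrite mem_undup mem_cat (supp_seqP f2) orbC => ->.
have sS w : S1 w - S2 w != 0 -> w \in s.
  case: (eqVneq (S1 w) 0) => [->|/sS1 //].
  by rewrite sub0r oppr_eq0; exact: sS2.
by rewrite (csum_seq _ us sS1) (csum_seq _ us sS2) (csum_seq _ us sS) -sumrB.
Qed.

Lemma ind_neq0 (w0 w : M) : ind w0 w != 0 -> w = w0.
Proof. by rewrite /ind; case: pselect. Qed.

Lemma fin_supp_ind (w0 : M) : fin_supp (ind w0).
Proof. by apply: (@fin_supp_sub _ [:: w0]) => w /ind_neq0 ->; rewrite inE. Qed.

Lemma csum_ind (w0 : M) P : csum (ind w0) P = if `[< P w0 >] then 1 else 0.
Proof.
rewrite (@csum_seq _ _ [:: w0]) // => [|w /ind_neq0 ->]; last by rewrite inE.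
by rewrite big_cons big_nil addr0 /ind; case: pselect.
Qed.

End FormalSums.

Section ChainMap.
Variables (M N : choiceType) (phi : M -> N).

(* The homomorphism <phi> of free abelian groups, on coefficient functions. *)
Definition chain_map (S : M -> int) (n : N) : int :=
  csum S [set m | phi m = n].

Lemma chain_map_supp S : fin_supp S ->
  forall n, chain_map S n != 0 -> n \in undup (map phi (supp_seq S)).
Proof.
move=> fS n /csum_neq0 [w /= <- Sw]; rewrite mem_undup; apply: map_f.
by rewrite supp_seqP.
Qed.

Lemma fin_supp_chain_map S : fin_supp S -> fin_supp (chain_map S).
Proof. by move=> fS; apply: fin_supp_sub; exact: chain_map_supp. Qed.

Lemma csum_chain_map S (P : set N) : fin_supp S ->
  csum (chain_map S) P = csum S (phi @^-1` P).
Proof.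
move=> fS; rewrite (csum_seq _ (undup_uniq _) (chain_map_supp fS)).
rewrite (csum_supp _ fS).
under eq_bigr => n _ do rewrite /chain_map (csum_supp _ fS).
rewrite (exchange_big_dep xpredT) //= [RHS]big_mkcond /=.
rewrite [LHS]big_seq [RHS]big_seq.
apply: eq_bigr => w ws.
have phiw : phi w \in undup (map phi (supp_seq S)) by rewrite mem_undup map_f.
rewrite (big_rem _ phiw) /= big1_seq ?addr0.
  by case: asboolP => Pw; case: asboolP.
move=> n /andP [/andP [_ /asboolP <-]].
by rewrite mem_rem_uniqF // undup_uniq.
Qed.

Lemma chain_map_indB S (w0 : M) : fin_supp S ->
  chain_map (fun w => ind w0 w - S w) =
  fun n => ind (phi w0) n - chain_map S n.
Proof.
move=> fS; apply/funext => n.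
rewrite /chain_map csumB //; last exact: fin_supp_ind.
rewrite csum_ind; congr (_ - _); rewrite /ind.
case: pselect => [e|nw0] /=; case: asboolP => //=.
  by rewrite e.
by move/esym.
Qed.

Lemma supported_in_chain_map (P : set M) (Q : set N) S :
  (forall m, P m -> Q (phi m)) -> supported_in P S ->
  supported_in Q (chain_map S).
Proof. by move=> PQ sS n /csum_neq0 [m /= <- /sS /PQ]. Qed.

End ChainMap.

Lemma layout_face_uniq (E : finType) (A : {set {set E}}) (F F' : {set E})
    (p : simplex E) :
  layout A -> F \in A -> F' \in A -> faceD F p -> faceD F' p -> F = F'.
Proof.
move=> [_ dA] FA F'A [p0 s1 pF] [_ _ pF']; apply/eqP; apply: contraT => FF'.
have p_eq0 e : set_val p e = 0%R.
  case: (boolP (e \in F)) => eF; last exact: pF.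
  apply: pF'; apply/negP => eF'.
  by have := dA F F' FA F'A FF'; move/setP/(_ e); rewrite !inE eF eF'.
move: s1; rewrite (eq_bigr (fun _ => 0%R)) ?big1 // => /esym/eqP.
by rewrite oner_eq0.
Qed.

Lemma agree_on_eqr (X Y : ptopologicalType) (E : finType)
    (D : set (simplex E)) (w u v : gen X Y E) :
  agree_on D u v -> (agree_on D w u <-> agree_on D w v).
Proof. by move=> uv; split=> wu p Dp; rewrite wu // uv. Qed.

Section Fissile.
Variables (X Y X' Y' : ptopologicalType) (E : finType).
Implicit Types (W : set (X -> Y)) (S : gen X Y E -> int).

Definition postcomp (psi : (X -> Y) -> X' -> Y') (w : gen X Y E) :
  gen X' Y' E := fun p => psi (w p).

Lemma layout_glue (A : {set {set E}}) (wF : {set E} -> gen X Y E) : layout A ->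
  exists g : gen X Y E, forall F, F \in A -> agree_on (faceD F) (wF F) g.
Proof.
move=> lA.
exists (fun p => wF (xget finset.set0 [set F | F \in A /\ faceD F p]) p).
move=> F FA p Fp; case: xgetP => [G _ [GA Gp]|/(_ F) []//].
by rewrite (layout_face_uniq lA GA FA Gp Fp).
Qed.

Lemma fissile_csumT W S : fissile W S -> csum S setT = 1.
Proof.
have layout0 : layout (finset.set0 : {set {set E}}).
  by split=> [F|F G]; rewrite finset.in_set0.
move=> /(_ _ layout0 (fun _ _ => point)); rewrite big_set0 => <-.
  by apply: eq_csum => w _; split=> // _ F; rewrite finset.in_set0.
by move=> F; rewrite finset.in_set0.
Qed.

Lemma agree_on_postcomp psi W (D : set (simplex E)) (w w' : gen X Y E) :
  {in W &, injective psi} -> (forall p, W (w p)) -> (forall p, W (w' p)) ->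
  agree_on D (postcomp psi w) (postcomp psi w') <-> agree_on D w w'.
Proof.
move=> psi_inj Ww Ww'; split=> ww' p Dp; last by rewrite /postcomp ww'.
by apply: psi_inj; rewrite ?in_setE //; exact: ww'.
Qed.

Lemma fissile_postcomp_inj psi W (W' : set (X' -> Y')) S :
  {in W &, injective psi} -> fin_supp S -> supported_in (is_map_into W) S ->
  fissile W S -> fissile W' (chain_map (postcomp psi) S).
Proof.
move=> psi_inj fS sS fisS A lA g' _.
rewrite csum_chain_map //; under eq_bigr => F _ do rewrite csum_chain_map //.
(* If no generator of S maps onto g' on some face of A, both sides vanish. *)
have [hit|] := pselect (forall F, F \in A ->
  exists w, S w != 0 /\ agree_on (faceD F) (postcomp psi w) g'); last first.
  move/existsNP => [F /not_implyP [FA /forallNP Fmiss]].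
  have miss P : P `<=` [set w | agree_on (faceD F) (postcomp psi w) g'] ->
      csum S P = 0.
    move=> PF; apply: csum0 => w /PF Fw; apply/eqP; apply: contraT => Sw.
    by case: (Fmiss w).
  rewrite (big_setD1 F FA) /= [in RHS]miss // mul0r miss // => w; exact.
(* Otherwise glue such generators over the faces of A into g; by injectivity of
   psi, mapping onto g' on a face is agreeing with g there. *)
have [wF wF_hit] : {wF : {set E} -> gen X Y E & forall F, F \in A ->
    S (wF F) != 0 /\ agree_on (faceD F) (postcomp psi (wF F)) g'}.
  apply: (@choice _ _ (fun F w => F \in A ->
    S w != 0 /\ agree_on (faceD F) (postcomp psi w) g')) => F.
  have [/hit [w]|FA] := pselect (F \in A); first by exists w.
  by exists (fun _ _ => point : Y).
have [g gF] := layout_glue wF lA.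
have key F w : F \in A -> S w != 0 ->
    agree_on (faceD F) (postcomp psi w) g' <-> agree_on (faceD F) w g.
  move=> FA Sw; have [SwF agF] := wF_hit F FA.
  apply: iff_trans (iff_sym (agree_on_eqr _ agF)) _.
  apply: iff_trans (agree_on_postcomp _ psi_inj (sS w Sw).2 (sS _ SwF).2) _.
  exact: agree_on_eqr (gF F FA).
have -> : csum S (postcomp psi @^-1`
    [set w' | forall F, F \in A -> agree_on (faceD F) w' g']) =
    csum S [set w | forall F, F \in A -> agree_on (faceD F) w g].
  by apply: eq_csum => w Sw; split=> ag F FA; apply/(key F w FA Sw); exact: ag.
under eq_bigr => F FA do rewrite (eq_csum (fun w Sw => key F w FA Sw)).
apply: fisS => // F FA; have [cwF WwF] := sS _ (wF_hit F FA).1; split.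
  apply: (subspace_eq_continuous _ (continuous_subspaceT cwF)) => p.
  by rewrite inE => Fp; exact: gF.
by move=> p Fp; rewrite -(gF F FA p Fp).
Qed.

Lemma fissile_chain_map_subsingleton (phi : gen X Y E -> gen X' Y' E) W
    (W' : set (X' -> Y')) S :
  (forall f g : X' -> Y', f = g) -> fin_supp S -> fissile W S ->
  fissile W' (chain_map phi S).
Proof.
move=> single fS fisS A lA g' _.
have allT (P : set (gen X' Y' E)) : P g' -> P = setT.
  move=> Pg; apply/funext => w'; apply/propext; split=> // _.
  suff -> : w' = g' by [].
  by apply/funext => p; exact: single.
have csumT : csum (chain_map phi S) setT = 1.
  by rewrite csum_chain_map // preimage_setT (fissile_csumT fisS).
rewrite (allT [set w' | forall F, F \in A -> agree_on (faceD F) w' g']) //.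
rewrite csumT big1 // => F _.
by rewrite (allT [set w' | agree_on (faceD F) w' g']).
Qed.

End Fissile.

Section SmashChains.
Variables (X Y T : ptopologicalType) (E : finType).
Local Notation smash_chain :=
  (chain_map (postcomp (smash_map (X:=X) (Y:=Y) T))).

Lemma smash_map_inj (t0 : T) (f g : X -> Y) : t0 <> point ->
  f point = point -> g point = point -> smash_map T f = smash_map T g -> f = g.
Proof.
move=> t0N fpt gpt fg; apply/funext => x.
have [->|xN] := pselect (x = point); first by rewrite fpt gpt.
have qN : \pi_(smash X T) (x, t0) <> point.
  by move/repr_wedge; rewrite repr_pi_offwedge // => -[].
move/(congr1 (fun h => h (\pi_(smash X T) (x, t0)))): fg.
by move/(smash_map_offpoint_eq _ _ qN); rewrite repr_pi_offwedge // => -[].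
Qed.

Lemma smash_point_trivial : (forall t : T, t = point) ->
  forall q : smash Y T, q = point.
Proof. by move=> Tpt q; apply/repr_wedge; right; exact: Tpt. Qed.

Lemma fissile_smash_chain (a : X -> Y) (S : gen X Y E -> int) :
  fin_supp S -> supported_in (is_map_into (path_comp a)) S ->
  fissile (path_comp a) S ->
  fissile (path_comp (smash_map T a)) (smash_chain S).
Proof.
move=> fS sS fisS.
have [[t0 t0N]|Tpt] := pselect (exists t0 : T, t0 <> point).
  apply: (fissile_postcomp_inj (W := path_comp a)) => // f g.
  move=> /set_mem /path_comp_bmap [_ fpt] /set_mem /path_comp_bmap [_ gpt].
  exact: smash_map_inj t0N fpt gpt.
have T_point (t : T) : t = point by apply: contrapT => tN; apply: Tpt; exists t.
apply: (@fissile_chain_map_subsingleton _ _ _ _ _ _ (path_comp a)) => // f g.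
apply/funext => q.
by rewrite [LHS]smash_point_trivial // [RHS]smash_point_trivial.
Qed.

Lemma smash_agree_at (l : seq (simplex E * smash X T)) (w w1 : gen X Y E) :
  (forall uq, List.In uq l -> uq.2 <> point) ->
  (forall uq, List.In uq l ->
     smash_map T (w uq.1) uq.2 = smash_map T (w1 uq.1) uq.2) <->
  (forall ux, List.In ux (map (fun uq => (uq.1, (repr uq.2).1)) l) ->
         w ux.1 ux.2 = w1 ux.1 ux.2).
Proof.
move=> lN; split=> ww1 [u q].
  by move=> /List.in_map_iff [[v q'] [[<- <-] vl]]; apply/smash_map_offpoint_eq;
    [exact: lN vl | exact: ww1 vl].
move=> uql; apply/smash_map_offpoint_eq; first exact: lN uql.
by apply: (ww1 (u, (repr q).1)); apply/List.in_map_iff; exists (u, q).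
Qed.

Lemma in_filt_smash_chain (r : nat) (b : X -> Y) (S : gen X Y E -> int) :
  fin_supp S -> in_filt r.+1 (fun w => ind (fun _ => b) w - S w) ->
  in_filt r.+1 (fun w' => ind (fun _ => smash_map T b) w' - smash_chain S w').
Proof.
move=> fS filtS l lr lN w0.
rewrite -(chain_map_indB _ (fun _ => b) fS) csum_chain_map; last first.
  exact: fin_suppB (fin_supp_ind _) fS.
have [[w1 /= w1w0]|nw] := pselect (exists w1 : gen X Y E,
    forall uq, List.In uq l -> smash_map T (w1 uq.1) uq.2 = w0 uq.1 uq.2);
  last by apply: csum0 => w ww0; case: nw; exists w.
rewrite -(filtS (map (fun uq => (uq.1, (repr uq.2).1)) l) _ _ w1); last 2 first.
- by rewrite size_map.
- move=> ux /List.in_map_iff [uq [<- uql]].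
  by have [] := repr_offpoint (lN uq uql).
apply: eq_csum => w _; apply: iff_trans (smash_agree_at w w1 lN).
by split=> ww1 uq uql; have := ww1 uq uql; rewrite /postcomp /= w1w0.
Qed.

End SmashChains.

Theorem corollary5p3 (X Y T : ptopologicalType) (r : nat) (a b : X -> Y) :
  cellular X -> cellular Y -> cellular T ->
  compact [set: X] -> compact [set: T] ->
  bmap a -> bmap b ->
  r_approx r a b ->
  r_approx r (smash_map T a) (smash_map T b).
Proof.
move=> [hX _] _ [hT _] cX cT ba _ ab E E0.
have [S [fS sS fisS filtS]] := ab E E0.
exists (chain_map (postcomp (smash_map T)) S); split.
- exact: fin_supp_chain_map.
- apply: supported_in_chain_map sS => w.
  exact: is_map_into_smash.
- exact: fissile_smash_chain.
- exact: in_filt_smash_chain.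
Qed.
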